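(* Let $n\ge1$ and let $A,B\in M_n(\mathbb C)$ be unitary. Then $|T(A,B)|\le n^{n^2/2}$, with equality if and only if $A$ and $B$ have no multiple eigenvalues, $A^n$ and $B^n$ are scalar matrices, and the orthonormal eigenbases of $A$ and of $B$ are mutually unbiased.
   Context: $M(A,B)\in M_{n^2}(\mathbb C)$ is the block matrix of $n\times n$ blocks whose $(i,j)$-th block is $A^{j-1}B^{i-1}$ ($i,j=1,\dots,n$), and $T(A,B)=\det M(A,B)$. Two orthonormal bases $u_1,\dots,u_n$ and $v_1,\dots,v_n$ of $\mathbb C^n$ are mutually unbiased if $|u_s^*v_t|^2=1/n$ for all $s,t$. (When $A$ has no multiple eigenvalues, its orthonormal eigenbasis is unique up to phases of the vectors, so mutual unbiasedness is well defined.) *)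

(* complex numbers as R[i] for R : realType (i.e. C). *)
From HB Require Import structures.
From mathcomp Require Import all_boot all_order all_algebra.
From mathcomp Require Import complex.
From mathcomp Require Import reals.
Set Implicit Arguments.
Unset Strict Implicit.
Unset Printing Implicit Defensive.
Import Order.TTheory GRing.Theory Num.Theory.
Local Open Scope ring_scope.
Local Open Scope sesquilinear_scope.

Definition Mblock (C : nzRingType) (n : nat) (A B : 'M[C]_n) :=
  @mxblock C n n (fun _ => n) (fun _ => n)
    (fun (i j : 'I_n) => A ^+ j *m B ^+ i).

Definition Tdet (C : comNzRingType) (n : nat) (A B : 'M[C]_n) : C :=
  \det (Mblock A B).

Definition no_multiple_eigenvalues (C : fieldType) (n : nat) (A : 'M[C]_n) :=
  forall a : C, ~ (('X - a%:P) ^+ 2 %| char_poly A).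

Definition orthonormal_eigenbasis (C : numClosedFieldType) (n : nat)
    (A U : 'M[C]_n) :=
  U \is unitarymx /\ forall s : 'I_n, exists d : C, A *m col s U = d *: col s U.

Definition mutually_unbiased (C : numClosedFieldType) (n : nat) (U V : 'M[C]_n) :=
  forall s t : 'I_n, `|(U ^t* *m V) s t| ^+ 2 = n%:R^-1.

Definition eigenbases_mutually_unbiased (C : numClosedFieldType) (n : nat)
    (A B : 'M[C]_n) :=
  exists U V : 'M[C]_n, [/\ orthonormal_eigenbasis A U,
                           orthonormal_eigenbasis B V & mutually_unbiased U V].

(* Write M = M(A,B). For unitary A and B the (j,k) block of M^* M is the twirl
   sum_i B^-i A^-j A^k B^i of A^-j A^k over the powers of B, so the diagonal
   blocks are n I. Hadamard's inequality (AM-GM for the eigenvalues of M^* M)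
   gives |det M|^2 <= n^(n^2), with equality iff M^* M = n I, i.e. iff all the
   off-diagonal twirls vanish.
   In an orthonormal eigenbasis (v_t) of B, with eigenvalues mu_t, twirling by B
   multiplies the (s,t) entry by the geometric sum sum_i (mu_s^* mu_t)^i, and if
   (u_s) is an eigenbasis of A with eigenvalues lambda_s, the t-th diagonal entry
   of p(A) is sum_s |u_s^* v_t|^2 p(lambda_s). So the vanishing of the twirls of
   A, ..., A^(n-1) makes the lambda_s distinct and the bases unbiased, by
   evaluating at suitable polynomials of degree < n, and Cayley-Hamilton makes
   A^n scalar; M M^* = n I gives the same conclusions for B. Conversely, under
   these conditions the twirls vanish because for 0 < m < n the power sums
   sum_s lambda_s^m of the n distinct n-th roots of a scalar are zero. *)

From HB Require Import structures.
From mathcomp Require Import all_boot all_order all_algebra.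
From mathcomp Require Import complex reals.
From mathcomp Require Import ring zify.
Set Implicit Arguments.
Unset Strict Implicit.
Unset Printing Implicit Defensive.
Import Order.TTheory GRing.Theory Num.Theory.
Local Open Scope ring_scope.
Local Open Scope sesquilinear_scope.

Section Adjoint.
Variable C : numClosedFieldType.

Lemma trmxC_mul m n p (X : 'M[C]_(m, n)) (Y : 'M[C]_(n, p)) :
  (X *m Y)^t* = Y^t* *m X^t*.
Proof. by rewrite trmx_mul map_mxM. Qed.

Lemma trmxC1 n : (1%:M : 'M[C]_n)^t* = 1%:M.
Proof. by rewrite trmx1 map_mx1. Qed.

Lemma trmxC_diag n (d : 'rV[C]_n) : (diag_mx d)^t* = diag_mx (map_mx Num.conj d).
Proof.
apply/matrixP => i j; rewrite !mxE eq_sym.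
by case: eqP => [->|_]; rewrite ?mulr1n ?mulr0n ?rmorph0.
Qed.

Lemma trmxC_mulmx1 n (X : 'M[C]_n) : X \is unitarymx -> X^t* *m X = 1%:M.
Proof. by move/unitarymxP/mulmx1C. Qed.

Lemma unitarymx_row_norm m n (W : 'M[C]_(m, n)) k : W \is unitarymx ->
  \sum_t `|W k t| ^+ 2 = 1.
Proof.
move/unitarymxP/matrixP/(_ k k); rewrite !mxE eqxx mulr1n => <-.
by apply: eq_bigr => t _; rewrite normCK !mxE.
Qed.

Lemma unitarymx_normal n (X : 'M[C]_n) : X \is unitarymx -> X \is normalmx.
Proof. by move=> Xu; apply/normalmxP; rewrite (unitarymxP Xu) trmxC_mulmx1. Qed.

Lemma unitarymx1 n : (1%:M : 'M[C]_n) \is unitarymx.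
Proof. by apply/unitarymxP; rewrite trmxC1 mulmx1. Qed.

Lemma unitarymxX n (X : 'M[C]_n.+1) k : X \is unitarymx -> X ^+ k \is unitarymx.
Proof.
move=> Xu; elim: k => [|k IH]; first by rewrite expr0 unitarymx1.
by rewrite exprS mul_unitarymx.
Qed.

Lemma trmxCX n (X : 'M[C]_n.+1) k : (X ^+ k)^t* = X^t* ^+ k.
Proof.
elim: k => [|k IH]; first by rewrite !expr0 trmxC1.
by rewrite exprS exprSr -IH trmxC_mul.
Qed.

Lemma unitarymx_comm_trmxC n (X Z : 'M[C]_n) : X \is unitarymx ->
  X *m Z = Z *m X -> X^t* *m Z = Z *m X^t*.
Proof.
move=> Xu XZ; rewrite -[Z *m X^t*]mul1mx -(trmxC_mulmx1 Xu) -!mulmxA.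
by rewrite [X *m (Z *m _)]mulmxA XZ -!mulmxA (unitarymxP Xu) mulmx1.
Qed.

Lemma gram_scalar_trmxC n (X : 'M[C]_n) (c : C) : c != 0 ->
  X^t* *m X = c%:M -> X *m X^t* = c%:M.
Proof.
move=> c0 XX; have : (c^-1 *: X^t*) *m X = 1%:M.
  by rewrite -scalemxAl XX scale_scalar_mx mulVf.
move/mulmx1C; rewrite -scalemxAr => /(congr1 (fun M => c *: M)).
by rewrite scalerA mulfV // scale1r => ->; rewrite scalemx1.
Qed.

End Adjoint.

(** * Hadamard's inequality for Gram matrices *)

Lemma leif_sqr (R : numDomainType) (x y : R) c : 0 <= x -> 0 <= y ->
  x ^+ 2 <= y ^+ 2 ?= iff c -> x <= y ?= iff c.
Proof.
move=> x0 y0 [le_sqr eq_sqr]; split; last by rewrite -eq_sqr eqrXn2.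
by rewrite -(ler_pXn2r (isT : (0 < 2)%N)) ?nnegrE.
Qed.

Section GramDeterminant.
Variables (C : numClosedFieldType) (K : nat) (X : 'M[C]_K).
Local Notation G := (X^t* *m X).

Lemma normCK_det : `|\det X| ^+ 2 = \det G.
Proof. by rewrite normCK det_mulmx det_map_mx det_tr mulrC. Qed.

Lemma gram_spectral : exists S (d : 'rV[C]_K),
  [/\ S \is unitarymx, G = S^t* *m diag_mx d *m S & forall k, 0 <= d 0 k].
Proof.
have Gn : G \is normalmx by apply/normalmxP; rewrite trmxC_mul trmxCK.
have Su := spectral_unitarymx G.
have GE : G = (spectralmx G)^t* *m diag_mx (spectral_diag G) *m spectralmx G.
  by have := orthomx_spectralP Gn; rewrite invmx_unitary.
exists (spectralmx G), (spectral_diag G); split=> // k.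
set S := spectralmx G in Su GE *; set d := spectral_diag G in GE *.
have -> : d 0 k = (S *m G *m S^t*) k k.
  by rewrite GE !mulmxA (unitarymxP Su) mul1mx -mulmxA (unitarymxP Su) mulmx1
             mxE eqxx mulr1n.
have -> : S *m G *m S^t* = (X *m S^t*)^t* *m (X *m S^t*).
  by rewrite trmxC_mul trmxCK !mulmxA.
by rewrite mxE; apply: sumr_ge0 => l _; rewrite !mxE mulrC mul_conjC_ge0.
Qed.

Lemma det_gram_leif :
  \det G <= (\tr G / K%:R) ^+ K ?= iff (G == (\tr G / K%:R)%:M).
Proof.
have [S [d [Su GE d_ge0]]] := gram_spectral.
have DE : diag_mx d = S *m G *m S^t*.
  by rewrite GE !mulmxA (unitarymxP Su) mul1mx -mulmxA (unitarymxP Su) mulmx1.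
have -> : \det G = \prod_k d 0 k.
  by rewrite GE !det_mulmx det_diag mulrAC -det_mulmx trmxC_mulmx1 // det1 mul1r.
have -> : \tr G = \sum_k d 0 k.
  by rewrite GE mxtrace_mulC mulmxA (unitarymxP Su) mul1mx mxtrace_diag.
have := @leif_AGM C 'I_K predT (d 0) (fun k _ => d_ge0 k).
rewrite cardT size_enum_ord; set mu := _ / _ => -[le agm_eq].
split; first exact: le; clear le.
have -> : (\prod_k d 0 k == mu ^+ K) =
  [forall i in predT, forall j in predT, d 0 i == d 0 j] := agm_eq; clear agm_eq.
apply/forall_inP/eqP => [d_const | Gmu k _]; last first.
  apply/forall_inP => j _; have /matrixP dE := DE.
  by have := dE k k; have := dE j j; rewrite Gmu scalar_mxC -mulmxA
    (unitarymxP Su) mulmx1 !mxE !eqxx !mulr1n => -> ->.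
have [K0|K_gt0] := posnP K; first by apply/matrixP => i; have := ltn_ord i; rewrite {2}K0.
pose k0 := Ordinal K_gt0.
have dK k : d 0 k = d 0 k0 by apply/eqP/(forall_inP (d_const k isT)).
have -> : mu = d 0 k0.
  rewrite /mu (eq_bigr _ (fun k _ => dK k)) sumr_const card_ord.
  by rewrite -[d 0 k0 *+ K]mulr_natr mulfK // pnatr_eq0 -lt0n.
have dE : diag_mx d = (d 0 k0)%:M by apply/matrixP => i j; rewrite !mxE dK.
by rewrite GE dE scalar_mxC -mulmxA trmxC_mulmx1 // mulmx1.
Qed.

End GramDeterminant.

(** * Twirls over the powers of a unitary matrix *)

Section Twirl.
Variables (C : numClosedFieldType) (n' : nat).
Local Notation n := n'.+1.
Implicit Types (P Q X : 'M[C]_n).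

Definition twirl Q X := \sum_(i < n) (Q ^+ i)^t* *m X *m Q ^+ i.

Definition powers_twirl0 Q P := forall m, (0 < m < n)%N -> twirl Q (P ^+ m) = 0.

Lemma twirl0 Q : twirl Q 0 = 0.
Proof. by rewrite /twirl big1 // => i _; rewrite mulmx0 mul0mx. Qed.

Lemma twirl_comm Q X : Q \is unitarymx -> X *m Q = Q *m X -> twirl Q X = X *+ n.
Proof.
move=> Qu XQ; rewrite /twirl (eq_bigr (fun _ => X)) ?sumr_const ?card_ord // => i _.
by rewrite -mulmxA [X *m _](commrX i XQ) mulmxA trmxC_mulmx1 ?unitarymxX ?mul1mx.
Qed.

Lemma twirl_scalar Q (a : C) : Q \is unitarymx -> twirl Q a%:M = (n%:R * a)%:M.
Proof.
move=> Qu; rewrite twirl_comm -?scalar_mxC // -scaler_nat scale_scalar_mx.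
by rewrite mulr_natl.
Qed.

Lemma horner_mx_sum P (p : {poly C}) k : (size p <= k)%N ->
  horner_mx P p = \sum_(d < k) p`_d *: P ^+ d.
Proof.
move=> sp; have pE : p = \poly_(i < k) p`_i.
  apply/polyP => i; rewrite coef_poly; case: ltnP => // ki.
  by rewrite nth_default // (leq_trans sp).
rewrite {1}pE poly_def rmorph_sum; apply: eq_bigr => d _.
by rewrite -mul_polyC rmorphM /= horner_mx_C rmorphXn /= horner_mx_X
  [_ * _]mul_scalar_mx.
Qed.

Lemma twirl_horner Q P (p : {poly C}) : Q \is unitarymx -> powers_twirl0 Q P ->
  (size p <= n.+1)%N ->
  twirl Q (horner_mx P p) = (n%:R * p`_0)%:M + p`_n *: twirl Q (P ^+ n).
Proof.
move=> Qu PQ sp; rewrite (horner_mx_sum P sp).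
have -> : twirl Q (\sum_(d < n.+1) p`_d *: P ^+ d) =
          \sum_(d < n.+1) p`_d *: twirl Q (P ^+ d).
  rewrite /twirl (eq_bigr (fun i : 'I_n => \sum_(d < n.+1)
      p`_d *: ((Q ^+ i)^t* *m P ^+ d *m Q ^+ i))) => [|i _].
    by rewrite exchange_big; apply: eq_bigr => d _; rewrite scaler_sumr.
  rewrite mulmx_sumr mulmx_suml; apply: eq_bigr => d _.
  by rewrite -scalemxAr -scalemxAl.
rewrite big_ord_recl big_ord_recr /= big1 => [|d _]; last first.
  by rewrite PQ ?scaler0 //= ltnS ltn_ord.
by rewrite add0r expr0 twirl_scalar // scale_scalar_mx mulr1 mulrC.
Qed.

Lemma twirl_horner_small Q P (p : {poly C}) : Q \is unitarymx ->
  powers_twirl0 Q P -> (size p <= n)%N ->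
  twirl Q (horner_mx P p) = (n%:R * p`_0)%:M.
Proof.
move=> Qu PQ sp; rewrite twirl_horner ?(leq_trans sp) //.
by rewrite [p`_n]nth_default // scale0r addr0.
Qed.

Lemma powers_twirl0_scalar Q P : Q \is unitarymx -> powers_twirl0 Q P ->
  P ^+ n *m Q = Q *m P ^+ n -> is_scalar_mx (P ^+ n).
Proof.
(* Twirling the Cayley-Hamilton relation: the lower powers of P contribute only
   their constant term, and the commuting P^n is multiplied by n. *)
move=> Qu PQ comm; set p := char_poly P.
have p_n : p`_n = 1.
  by have := monicP (char_poly_monic P); rewrite lead_coefE size_char_poly.
have := twirl_horner Qu PQ (eq_leq (size_char_poly P)).
rewrite -/p Cayley_Hamilton twirl0 p_n scale1r twirl_comm // => /esym/eqP.
rewrite addr_eq0 => /eqP Pn; apply/is_scalar_mxP; exists (- p`_0).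
apply: (@scalerI _ _ n%:R); first by rewrite pnatr_eq0.
by rewrite scaler_nat -[P ^+ n *+ n]opprK -Pn scale_scalar_mx mulrN raddfN.
Qed.

Lemma powers_twirl0_commX Q P : Q \is unitarymx -> powers_twirl0 Q P ->
  (1 < n)%N -> P *m Q ^+ n = Q ^+ n *m P.
Proof.
(* Shifting the summation index conjugates the twirl of P by Q, so both sums
   vanish and the sum over i <= n telescopes to P = Q^-n P Q^n. *)
move=> Qu PQ n_gt1; pose f i := (Q ^+ i)^t* *m P *m Q ^+ i.
have sum_f : \sum_(i < n) f i = 0 by have := PQ 1%N; rewrite expr1 n_gt1; apply.
have sum_fS : \sum_(i < n) f i.+1 = 0.
  transitivity (Q^t* *m (\sum_(i < n) f i) *m Q); last by rewrite sum_f mulmx0 mul0mx.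
  rewrite mulmx_sumr mulmx_suml; apply: eq_bigr => i _.
  by rewrite /f exprSr trmxC_mul !mulmxA.
have : f 0%N + \sum_(i < n) f i.+1 = \sum_(i < n) f i + f n.
  by rewrite -(big_ord_recl _ (fun i : 'I_n.+1 => f i)) big_ord_recr.
rewrite sum_f sum_fS add0r addr0 /f expr0 trmxC1 mul1mx mulmx1 => P_conj.
by rewrite [in RHS]P_conj !mulmxA (unitarymxP (unitarymxX n Qu)) mul1mx.
Qed.

End Twirl.

(** * The Gram matrix of M(A,B) *)

Section MblockGram.
Variables (C : numClosedFieldType) (n' : nat).
Local Notation n := n'.+1.
Variables A B : 'M[C]_n.
Local Notation M := (Mblock A B).

Lemma trmxC_Mblock : M^t* = @mxblock C n n (fun _ => n) (fun _ => n)
  (fun j i => (A ^+ j *m B ^+ i)^t*).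
Proof. by apply/matrixP => s t; rewrite !mxE. Qed.

Lemma Mblock_gram : M^t* *m M = @mxblock C n n (fun _ => n) (fun _ => n)
  (fun j k => twirl B ((A ^+ j)^t* *m A ^+ k)).
Proof.
rewrite trmxC_Mblock /Mblock mul_mxblock; apply: eq_mxblock => j k.
by apply: eq_bigr => i _; rewrite trmxC_mul !mulmxA.
Qed.

Lemma Mblock_gram_adj : M *m M^t* = @mxblock C n n (fun _ => n) (fun _ => n)
  (fun i k => twirl (A^t*) (B ^+ i *m (B ^+ k)^t*)).
Proof.
rewrite trmxC_Mblock /Mblock mul_mxblock; apply: eq_mxblock => i k.
by apply: eq_bigr => j _; rewrite -trmxCX trmxCK trmxC_mul !mulmxA.
Qed.

Lemma Mblock_gram_adj_offdiag : M^t* *m M = (n%:R : C)%:M ->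
  forall i k : 'I_n, i != k -> twirl (A^t*) (B ^+ i *m (B ^+ k)^t*) = 0.
Proof.
move/gram_scalar_trmxC; rewrite pnatr_eq0 => /(_ isT).
rewrite Mblock_gram_adj -(mxdiagZ (p_ := fun _ : 'I_n => n)) /mxdiag.
by rewrite -eq_mxblockP => G_eq i k ik; have := G_eq i k; rewrite (negPf ik).
Qed.

Hypotheses (Au : A \is unitarymx) (Bu : B \is unitarymx).

Lemma twirl_gram_diag j : twirl B ((A ^+ j)^t* *m A ^+ j) = (n%:R : C)%:M.
Proof. by rewrite trmxC_mulmx1 ?unitarymxX // twirl_scalar // mulr1. Qed.

Lemma Mblock_gram_scalarP : M^t* *m M = (n%:R : C)%:M <->
  forall j k : 'I_n, j != k -> twirl B ((A ^+ j)^t* *m A ^+ k) = 0.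
Proof.
rewrite Mblock_gram -(mxdiagZ (p_ := fun _ : 'I_n => n)) /mxdiag -eq_mxblockP.
split=> G_eq j k; first by move=> jk; have := G_eq j k; rewrite (negPf jk).
case: eqVneq => [<-|jk]; last exact: G_eq.
by rewrite conform_mx_id twirl_gram_diag.
Qed.

Lemma Mblock_det_leif :
  `|Tdet A B| <= sqrtC (n%:R : C) ^+ (n * n) ?= iff (M^t* *m M == (n%:R : C)%:M).
Proof.
set K := (\sum_(i < n) n)%N; have K_E : K = (n * n)%N by rewrite /K sum_nat_const card_ord.
have mu : \tr (M^t* *m M) / K%:R = n%:R.
  rewrite Mblock_gram mxtrace_mxblock (eq_bigr (fun _ => n%:R *+ n)) => [|j _].
    rewrite sumr_const card_ord -mulrnA -K_E -[_ *+ K]mulr_natr mulfK //.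
    by rewrite pnatr_eq0 K_E.
  by rewrite twirl_gram_diag mxtrace_scalar.
apply: leif_sqr; rewrite ?normr_ge0 ?exprn_ge0 ?sqrtC_ge0 ?ler0n //.
rewrite /Tdet normCK_det -exprM mulnC exprM sqrtCK -K_E -mu.
exact: det_gram_leif.
Qed.

End MblockGram.

Section ClosedFieldFacts.
Variable C : numClosedFieldType.

Lemma geometric_sum_eq0 (z : C) k : z ^+ k = 1 -> z != 1 -> \sum_(i < k) z ^+ i = 0.
Proof.
move=> zk z1; have := subrX1 z k; rewrite zk subrr => /esym/eqP.
by rewrite mulf_eq0 subr_eq0 (negPf z1) => /eqP.
Qed.

Lemma unit_conjX (x : C) j k : x * x^* = 1 -> (j <= k)%N ->
  (x ^+ j)^* * x ^+ k = x ^+ (k - j).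
Proof.
move=> x1 jk; rewrite -(subnKC jk) exprD mulrA rmorphXn /= -exprMn.
by rewrite [x^* * x]mulrC x1 expr1n mul1r addKn.
Qed.

Variable n : nat.
Implicit Type l : 'I_n -> C.

Lemma sqr_dvdp_prod_XsubC l :
  (forall a, ~ ('X - a%:P) ^+ 2 %| \prod_k ('X - (l k)%:P)) <-> injective l.
Proof.
split=> [sqfree | l_inj a].
  apply/injectiveP/negPn/negP => /injectivePn[p [q pq lpq]].
  apply: (sqfree (l p)); rewrite (bigD1 p) //= (bigD1 q) /=; last by rewrite eq_sym.
  by rewrite -lpq mulrA -expr2 dvdp_mulIl.
have Xa0 : 'X - a%:P != 0 by rewrite monic_neq0 ?monicXsubC.
move=> dvd_sqr; have : root (\prod_k ('X - (l k)%:P)) a.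
  by rewrite -dvdp_XsubCl (dvdp_trans _ dvd_sqr) // expr2 dvdp_mulIl.
rewrite rootE horner_prod prodf_seq_eq0 => /hasP[q _ /=].
rewrite hornerXsubC subr_eq0 => /eqP aq.
move: dvd_sqr; rewrite (bigD1 q) //= -aq expr2 dvdp_mul2l // dvdp_XsubCl.
rewrite rootE horner_prod prodf_seq_eq0 => /hasP[k _ /andP[kq]].
by rewrite hornerXsubC subr_eq0 aq => /eqP/l_inj kq'; rewrite kq' eqxx in kq.
Qed.

Lemma size_prod_XsubC_but l q : size (\prod_(k | k != q) ('X - (l k)%:P)) = n.
Proof.
rewrite size_prod => [|k _]; last by rewrite -size_poly_eq0 size_XsubC.
rewrite (eq_bigr (fun _ => 2%N)) => [|k _]; last by rewrite size_XsubC.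
rewrite sum_nat_const.
have -> : #|[pred k | k != q]| = n.-1.
  by have := cardC1 q; rewrite card_ord => <-; apply: eq_card => k; rewrite !inE.
by case: n q l => [[]//|m] q l /=; lia.
Qed.

Lemma horner_prod_XsubC_but l q x :
  (\prod_(k | k != q) ('X - (l k)%:P)).[x] = \prod_(k | k != q) (x - l k).
Proof. by rewrite horner_prod; apply: eq_bigr => k _; rewrite hornerXsubC. Qed.

Lemma eval_functional_eq0 l (c : 'I_n -> C) : injective l ->
  (forall p : {poly C}, (size p <= n)%N -> \sum_k c k * p.[l k] = 0) ->
  forall k, c k = 0.
Proof.
move=> l_inj c_eval q; have := c_eval _ (eq_leq (size_prod_XsubC_but l q)).
rewrite (bigD1 q) //= [X in _ + X = _]big1 ?addr0 => [|k kq].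
  move/eqP; rewrite mulf_eq0 horner_prod_XsubC_but => /orP[/eqP//|].
  rewrite prodf_seq_eq0 => /hasP[k _ /andP[kq]].
  by rewrite subr_eq0 => /eqP/l_inj kq'; rewrite kq' eqxx in kq.
by rewrite horner_prod_XsubC_but (bigD1 k) //= subrr mul0r mulr0.
Qed.

End ClosedFieldFacts.

Section RootsOfScalar.
Variables (C : numClosedFieldType) (n' : nat) (c : C).
Local Notation n := n'.+1.
Variable l : 'I_n -> C.
Hypotheses (l_inj : injective l) (l_root : forall k, l k ^+ n = c) (c0 : c != 0).

Let s := [seq l k | k <- enum 'I_n].

Let s_uniq : uniq s. Proof. by rewrite map_inj_uniq ?enum_uniq. Qed.

Lemma roots_XnsubC_mem x : x ^+ n = c -> x \in s.
Proof.
have p0 : 'X^n - c%:P != 0 :> {poly C} by rewrite -size_poly_eq0 size_XnsubC.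
have rootp y : root ('X^n - c%:P) y = (y ^+ n == c) by rewrite rootE !hornerE subr_eq0.
move=> xc; apply/negPn/negP => xs.
have all_root : all (root ('X^n - c%:P)) (x :: s).
  rewrite /= {1}rootp xc eqxx /=.
  by apply/allP => _ /mapP[k _ ->]; rewrite rootp l_root.
have := max_poly_roots p0 all_root.
by rewrite /= s_uniq xs size_XnsubC // size_map size_enum_ord ltnn => /(_ isT).
Qed.

Lemma power_sum_roots_eq0 m : (0 < m < n)%N -> \sum_k l k ^+ m = 0.
Proof.
move=> /andP[m0 mn].
have l0 k : l k != 0 by apply: contraNneq c0 => lk0; rewrite -(l_root k) lk0 expr0n.
have -> : \sum_k l k ^+ m = \sum_(x <- s) x ^+ m by rewrite big_map big_enum.
set S := \sum_(x <- s) _.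
have S_rot k : S = (l k / l 0) ^+ m * S.
  set z := l k / l 0.
  have zn : z ^+ n = 1 by rewrite exprMn exprVn !l_root divff.
  have zs_uniq : uniq (map (fun y => z * y) s).
    by rewrite map_inj_uniq // => a b; apply: mulfI; rewrite mulf_neq0 ?invr_eq0.
  have zs_sub : {subset map (fun y => z * y) s <= s}.
    move=> _ /mapP[_ /mapP[j _ ->] ->]; apply: roots_XnsubC_mem.
    by rewrite exprMn zn mul1r l_root.
  have [_ zs_size] := uniq_min_size zs_uniq zs_sub (eq_leq (esym (size_map _ _))).
  rewrite -[LHS](perm_big _ (uniq_perm zs_uniq s_uniq zs_size)) big_map mulr_sumr.
  by apply: eq_bigr => x _; rewrite exprMn.
(* Multiplication by l k / l 0 permutes the roots of X^n - c, so S is fixed by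
   the factor (l k / l 0)^m; if S != 0 all the l k would be roots of
   X^m - (l 0)^m, which has fewer than n roots. *)
apply/eqP/negPn/negP => S0.
have lm k : l k ^+ m = l 0 ^+ m.
  have := S_rot k; rewrite -[S in LHS]mul1r => /(mulIf S0) /esym.
  by rewrite exprMn exprVn => /(canRL (divfK (expf_neq0 m (l0 0)))); rewrite mul1r.
have q0 : 'X^m - (l 0 ^+ m)%:P != 0 :> {poly C} by rewrite -size_poly_eq0 size_XnsubC.
have all_root : all (root ('X^m - (l 0 ^+ m)%:P)) s.
  by apply/allP => _ /mapP[k _ ->]; rewrite rootE !hornerE lm subrr.
have := max_poly_roots q0 all_root s_uniq.
by rewrite size_XnsubC // size_map size_enum_ord ltnS leqNgt mn.
Qed.

End RootsOfScalar.

Section Eigendecomposition.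
Variables (C : numClosedFieldType) (n' : nat).
Local Notation n := n'.+1.
Implicit Types (A U V : 'M[C]_n) (l : 'rV[C]_n).

Definition eigendecomp A U l := U \is unitarymx /\ A *m U = U *m diag_mx l.

Lemma orthonormal_eigenbasisP A U :
  orthonormal_eigenbasis A U <-> exists l, eigendecomp A U l.
Proof.
split=> [[Uu Ucol] | [l [Uu AU]]].
  have [f Hf] := fin_all_exists Ucol; exists (\row_s f s); split=> //.
  apply/matrixP => i j; have /matrixP/(_ i 0) col_j := Hf j; rewrite !mxE in col_j.
  rewrite mul_mx_diag !mxE [U i j * _]mulrC -col_j.
  by apply: eq_bigr => k _; rewrite !mxE.
split=> // s; exists (l 0 s); apply/matrixP => i j.
move: AU => /matrixP/(_ i s); rewrite mul_mx_diag !mxE ord1 mulrC => <-.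
by apply: eq_bigr => k _; rewrite !mxE.
Qed.

Lemma eigendecompE A U l : eigendecomp A U l -> A = U *m diag_mx l *m U^t*.
Proof. by case=> Uu AU; rewrite -AU -mulmxA (unitarymxP Uu) mulmx1. Qed.

Lemma normal_eigendecomp A : A \is normalmx -> exists U l, eigendecomp A U l.
Proof.
move=> An; have Su := spectral_unitarymx A.
have AE := orthomx_spectralP An; rewrite invmx_unitary // in AE.
exists ((spectralmx A)^t*), (spectral_diag A); split; first by rewrite trmxC_unitary.
by rewrite {1}AE mulmxtVK.
Qed.

Lemma eigendecomp_horner A U l p : eigendecomp A U l ->
  horner_mx A p = U *m diag_mx (map_mx (horner p) l) *m U^t*.
Proof.
move=> AUl; have [Uu _] := AUl; rewrite (eigendecompE AUl).
have := @horner_mx_uconjC C n' p (U^t*) (diag_mx l).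
rewrite invmx_unitary ?trmxC_unitary // trmxCK horner_mx_diag => -> //.
by rewrite unitarymx_unit ?trmxC_unitary.
Qed.

Lemma eigendecompX A U l k : eigendecomp A U l ->
  A ^+ k *m U = U *m diag_mx (map_mx (fun x => x ^+ k) l).
Proof.
move=> AUl; have [Uu _] := AUl; have := eigendecomp_horner 'X^k AUl.
rewrite rmorphXn /= horner_mx_X => ->; rewrite -mulmxA trmxC_mulmx1 // mulmx1.
by congr (_ *m diag_mx _); apply/matrixP => i j; rewrite !mxE hornerXn.
Qed.

Lemma eigendecomp_scalarX A U l k (a : C) : eigendecomp A U l ->
  A ^+ k = a%:M -> forall j, l 0 j ^+ k = a.
Proof.
move=> AUl Aa j; have [Uu _] := AUl.
have := eigendecompX k AUl; rewrite Aa => /(congr1 (mulmx (U^t*))).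
rewrite mul_scalar_mx -scalemxAr trmxC_mulmx1 // mulmxA trmxC_mulmx1 // mul1mx.
by move=> /matrixP/(_ j j); rewrite !mxE eqxx !mulr1n mulr1.
Qed.

Lemma unitary_eigenvalue A U l : A \is unitarymx -> eigendecomp A U l ->
  forall k, l 0 k * (l 0 k)^* = 1.
Proof.
move=> Au AUl k; have [Uu AU] := AUl.
have : diag_mx l \is unitarymx.
  by rewrite -[diag_mx l]mul1mx -(trmxC_mulmx1 Uu) -mulmxA -AU mulmxA
    !mul_unitarymx ?trmxC_unitary.
move/unitarymxP; rewrite trmxC_diag mulmx_diag => /matrixP/(_ k k).
by rewrite !mxE eqxx !mulr1n.
Qed.

Lemma unitary_eigenvalue_neq0 A U l k : A \is unitarymx -> eigendecomp A U l ->
  l 0 k != 0.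
Proof.
move=> Au AUl; apply/eqP => lk0; have := unitary_eigenvalue Au AUl k.
by rewrite lk0 mul0r => /eqP; rewrite eq_sym oner_eq0.
Qed.

Lemma char_poly_unitary_conj A U : U \is unitarymx ->
  char_poly (U *m A *m U^t*) = char_poly A.
Proof.
move=> Uu.
have E : map_mx polyC U *m char_poly_mx A *m map_mx polyC (U^t*) =
         char_poly_mx (U *m A *m U^t*).
  rewrite /char_poly_mx mulmxBr mulmxBl scalar_mxC -(mulmxA 'X%:M) -!map_mxM.
  by rewrite (unitarymxP Uu) map_mx1 mulmx1.
rewrite /char_poly -E !det_mulmx mulrAC -det_mulmx -map_mxM (unitarymxP Uu).
by rewrite map_mx1 det1 mul1r.
Qed.

Lemma char_poly_eigendecomp A U l : eigendecomp A U l ->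
  char_poly A = \prod_k ('X - (l 0 k)%:P).
Proof.
move=> AUl; have [Uu _] := AUl.
rewrite (eigendecompE AUl) char_poly_unitary_conj // char_poly_trig ?diag_mx_is_trig //.
by apply: eq_bigr => k _; rewrite mxE eqxx mulr1n.
Qed.

Lemma no_multiple_eigenvaluesP A U l : eigendecomp A U l ->
  no_multiple_eigenvalues A <-> injective (l 0).
Proof. by move=> AUl; rewrite /no_multiple_eigenvalues (char_poly_eigendecomp AUl); exact: sqr_dvdp_prod_XsubC. Qed.

Lemma eigendecomp_trmxCX_mulX A U l j k : eigendecomp A U l ->
  (A ^+ j)^t* *m A ^+ k =
  U *m diag_mx (\row_x ((l 0 x ^+ j)^* * l 0 x ^+ k)) *m U^t*.
Proof.
move=> AUl; have [Uu _] := AUl.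
have AE i : A ^+ i = U *m diag_mx (map_mx (fun x => x ^+ i) l) *m U^t*.
  by rewrite -(eigendecompX i AUl) -mulmxA (unitarymxP Uu) mulmx1.
rewrite !AE !trmxC_mul trmxCK trmxC_diag !mulmxA -[U *m _ *m _ *m U]mulmxA.
rewrite trmxC_mulmx1 // mulmx1 -!mulmxA [diag_mx _ *m (diag_mx _ *m _)]mulmxA mulmx_diag.
by congr (U *m (diag_mx _ *m _)); apply/matrixP => i x; rewrite !mxE.
Qed.

Lemma twirl_eigendecomp B V m X s t : eigendecomp B V m ->
  (V^t* *m twirl B X *m V) s t =
  (V^t* *m X *m V) s t * \sum_(i < n) ((m 0 s)^* * m 0 t) ^+ i.
Proof.
move=> BVm; rewrite /twirl mulmx_sumr mulmx_suml summxE mulr_sumr.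
apply: eq_bigr => i _.
have -> : V^t* *m ((B ^+ i)^t* *m X *m B ^+ i) *m V =
          (B ^+ i *m V)^t* *m X *m (B ^+ i *m V) by rewrite trmxC_mul !mulmxA.
have regroup (M1 M2 M3 M4 M5 : 'M[C]_n) :
  M1 *m M2 *m M3 *m M4 *m M5 = M1 *m (M2 *m M3 *m M4) *m M5 by rewrite !mulmxA.
rewrite (eigendecompX i BVm) !trmxC_mul trmxC_diag !mulmxA regroup.
by rewrite mul_mx_diag mul_diag_mx !mxE rmorphXn exprMn /=; ring.
Qed.

Lemma diag_unitary_conj U V (f : 'rV[C]_n) t : U \is unitarymx ->
  (V^t* *m (U *m diag_mx f *m U^t*) *m V) t t =
  \sum_k `|(U^t* *m V) k t| ^+ 2 * f 0 k.
Proof.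
move=> Uu.
have -> : V^t* *m (U *m diag_mx f *m U^t*) *m V =
          (U^t* *m V)^t* *m diag_mx f *m (U^t* *m V) by rewrite !trmxC_mul trmxCK !mulmxA.
rewrite mxE; apply: eq_bigr => k _; rewrite mul_mx_diag !mxE normCK; ring.
Qed.

End Eigendecomposition.

(** * The equality case *)

Section PowersTwirl0.
Variables (C : numClosedFieldType) (n' : nat).
Local Notation n := n'.+1.
Variables (A B U V : 'M[C]_n) (l m : 'rV[C]_n).
Hypotheses (Au : A \is unitarymx) (Bu : B \is unitarymx) (AB : powers_twirl0 B A).
Hypotheses (AUl : eigendecomp A U l) (BVm : eigendecomp B V m).

Lemma powers_twirl0_eigenvalues_inj : injective (l 0).
Proof.
(* A repeated eigenvalue would make h vanish at A, although its constant
   coefficient does not. *)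
move=> p q lpq; apply/eqP/negPn/negP => pq.
set h := \prod_(k | k != q) ('X - (l 0 k)%:P).
have hA : horner_mx A h = 0.
  rewrite (eigendecomp_horner h AUl) (_ : map_mx _ l = 0) ?linear0 ?mulmx0 ?mul0mx //.
  apply/matrixP => i k; rewrite !mxE ord1 horner_prod_XsubC_but.
  have [->|kq] := eqVneq k q; first by rewrite (bigD1 p) //= -lpq subrr mul0r.
  by rewrite (bigD1 k) //= subrr mul0r.
have := twirl_horner_small Bu AB (eq_leq (size_prod_XsubC_but (l 0) q)).
rewrite hA twirl0 => /matrixP/(_ 0 0); rewrite !mxE eqxx mulr1n => /esym/eqP.
rewrite mulf_eq0 pnatr_eq0 /= -horner_coef0 horner_prod_XsubC_but.
rewrite prodf_seq_eq0 => /hasP[k _ /andP[_]].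
by rewrite sub0r oppr_eq0 (negPf (unitary_eigenvalue_neq0 k Au AUl)).
Qed.

Lemma twirl_horner_weights (h : {poly C}) t : (size h <= n)%N ->
  \sum_k `|(U^t* *m V) k t| ^+ 2 * h.[l 0 k] = h`_0.
Proof.
move=> sh; have [Uu _] := AUl; have [Vu _] := BVm.
have := twirl_eigendecomp (horner_mx A h) t t BVm.
rewrite twirl_horner_small // [V^t* *m _%:M]scalar_mxC -[_%:M *m _ *m V]mulmxA.
rewrite trmxC_mulmx1 // mulmx1 mxE eqxx mulr1n [_^* * _]mulrC (unitary_eigenvalue Bu BVm).
rewrite (eq_bigr (fun _ => 1)) => [|i _]; last by rewrite expr1n.
rewrite sumr_const card_ord (eigendecomp_horner h AUl) diag_unitary_conj // => E.
apply: (@mulIf _ n%:R); first by rewrite pnatr_eq0.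
rewrite [RHS]mulrC E -[1 *+ n]mulr_natr mul1r.
by congr (_ * _); apply: eq_bigr => k _; rewrite [X in _ = _ * X]mxE.
Qed.

Lemma powers_twirl0_mutually_unbiased : mutually_unbiased U V.
Proof.
have [Uu _] := AUl; have [Vu _] := BVm.
have UVu : U^t* *m V \is unitarymx by rewrite mul_unitarymx ?trmxC_unitary.
have sum_eval (h : {poly C}) : (size h <= n)%N -> \sum_k h.[l 0 k] = n%:R * h`_0.
  move=> sh; transitivity (\sum_t \sum_k `|(U^t* *m V) k t| ^+ 2 * h.[l 0 k]).
    rewrite exchange_big; apply: eq_bigr => k _.
    by rewrite -mulr_suml unitarymx_row_norm // mul1r.
  by rewrite (eq_bigr _ (fun t _ => twirl_horner_weights t sh)) sumr_const card_ord mulr_natl.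
(* The weights |w_kt|^2 and 1/n both represent p |-> p_0 on polynomials of
   size <= n, and the distinct nodes l k separate such weights. *)
move=> s t; apply/eqP; rewrite -subr_eq0; apply/eqP.
pose c k := `|(U^t* *m V) k t| ^+ 2 - n%:R^-1.
apply: (eval_functional_eq0 (c := c) powers_twirl0_eigenvalues_inj) => h sh.
under eq_bigr do rewrite mulrBl.
rewrite sumrB twirl_horner_weights // -mulr_sumr sum_eval // mulrA mulVf ?mul1r ?subrr //.
by rewrite pnatr_eq0.
Qed.

End PowersTwirl0.

Section UnbiasedTwirl.
Variables (C : numClosedFieldType) (n' : nat).
Local Notation n := n'.+1.
Variables (A B U V : 'M[C]_n) (l m : 'rV[C]_n) (a b : C).
Hypotheses (Au : A \is unitarymx) (Bu : B \is unitarymx).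
Hypotheses (AUl : eigendecomp A U l) (BVm : eigendecomp B V m).
Hypotheses (l_inj : injective (l 0)) (m_inj : injective (m 0)).
Hypotheses (Aa : A ^+ n = a%:M) (Bb : B ^+ n = b%:M) (UV_mub : mutually_unbiased U V).

Lemma sum_eigenvaluesXX_eq0 j k : (j < n)%N -> (k < n)%N -> j != k ->
  \sum_x (l 0 x ^+ j)^* * l 0 x ^+ k = 0.
Proof.
move=> jn kn jk; have l_root := eigendecomp_scalarX AUl Aa.
have a0 : a != 0 by rewrite -(l_root 0) expf_neq0 ?(unitary_eigenvalue_neq0 0 Au AUl).
have lt i i' : (i < i')%N -> (i' < n)%N -> \sum_x (l 0 x ^+ i)^* * l 0 x ^+ i' = 0.
  move=> ii' i'n; rewrite (eq_bigr (fun x => l 0 x ^+ (i' - i))) => [|x _].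
    apply: (power_sum_roots_eq0 l_inj l_root a0).
    by rewrite subn_gt0 ii' (leq_ltn_trans (leq_subr _ _) i'n).
  by rewrite unit_conjX ?(unitary_eigenvalue Au AUl) // ltnW.
case: ltngtP jk => [jk _|kj _|//]; first exact: lt.
transitivity ((\sum_x (l 0 x ^+ k)^* * l 0 x ^+ j)^*); last by rewrite lt // rmorph0.
by rewrite rmorph_sum; apply: eq_bigr => x _; rewrite rmorphM /= conjCK mulrC.
Qed.

Lemma mub_twirl0 (j k : 'I_n) : j != k -> twirl B ((A ^+ j)^t* *m A ^+ k) = 0.
Proof.
move=> jk; have [Uu _] := AUl; have [Vu _] := BVm; set Z := twirl B _.
have -> : Z = V *m (V^t* *m Z *m V) *m V^t*.
  by rewrite !mulmxA (unitarymxP Vu) mul1mx mulmxtVK.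
suff -> : V^t* *m Z *m V = 0 by rewrite mulmx0 mul0mx.
apply/matrixP => s t; rewrite (twirl_eigendecomp _ _ _ BVm) [RHS]mxE.
have [<-|st] := eqVneq s t.
  rewrite (eigendecomp_trmxCX_mulX _ _ AUl) diag_unitary_conj //.
  rewrite (eq_bigr (fun x => n%:R^-1 * ((l 0 x ^+ j)^* * l 0 x ^+ k))) => [|x _].
    by rewrite -mulr_sumr sum_eigenvaluesXX_eq0 ?ltn_ord // !mulr0 mul0r.
  by rewrite UV_mub mxE.
have b1 : b * b^* = 1.
  by rewrite -(eigendecomp_scalarX BVm Bb 0) rmorphXn -exprMn
    (unitary_eigenvalue Bu BVm) expr1n.
rewrite (geometric_sum_eq0 (k := n)) ?mulr0 //.
  by rewrite exprMn -rmorphXn !(eigendecomp_scalarX BVm Bb) mulrC b1.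
apply: contra_neq st => z1; apply: m_inj.
by rewrite -[m 0 t]mul1r -(unitary_eigenvalue Bu BVm s) -mulrA z1 mulr1.
Qed.

End UnbiasedTwirl.

Lemma is_scalar_mx_dim1 (R : nzRingType) k (X : 'M[R]_k.+1) : k = 0%N -> is_scalar_mx X.
Proof. by case: k X => // X _; apply/is_scalar_mxP; exists (X 0 0); apply: mx11_scalar. Qed.

Section EqualityCase.
Variables (C : numClosedFieldType) (n' : nat).
Local Notation n := n'.+1.

Definition mub_pair (A B : 'M[C]_n) :=
  [/\ no_multiple_eigenvalues A, no_multiple_eigenvalues B,
      is_scalar_mx (A ^+ n), is_scalar_mx (B ^+ n)
    & eigenbases_mutually_unbiased A B].

Variables A B : 'M[C]_n.
Hypotheses (Au : A \is unitarymx) (Bu : B \is unitarymx).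
Local Notation M := (Mblock A B).

Lemma Mblock_gram_scalar_mub_pair : M^t* *m M = (n%:R : C)%:M -> mub_pair A B.
Proof.
(* The blocks (0, k) of M^* M = n I give the twirl conditions for (B, A), and
   the blocks (k, 0) of M M^* = n I those for (A^*, B). *)
move=> G_n; have Atu : A^t* \is unitarymx by rewrite trmxC_unitary.
have AB : powers_twirl0 B A.
  move=> k /andP[k0 kn]; have jk : (0 : 'I_n) != Ordinal kn by rewrite -val_eqE /= eq_sym -lt0n.
  by have := (Mblock_gram_scalarP Au Bu).1 G_n _ _ jk; rewrite expr0 trmxC1 mul1mx.
have BA : powers_twirl0 (A^t*) B.
  move=> k /andP[k0 kn]; have kj : Ordinal kn != 0 by rewrite -val_eqE /= -lt0n.
  by have := Mblock_gram_adj_offdiag G_n kj; rewrite expr0 trmxC1 mulmx1.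
have [U [l AUl]] := normal_eigendecomp (unitarymx_normal Au).
have [V [m BVm]] := normal_eigendecomp (unitarymx_normal Bu).
split.
- exact/(no_multiple_eigenvaluesP AUl)/(powers_twirl0_eigenvalues_inj Au Bu AB AUl).
- exact/(no_multiple_eigenvaluesP BVm)/(powers_twirl0_eigenvalues_inj Bu Atu BA BVm).
- have [n1|n_gt1] := eqVneq n' 0%N; first exact: is_scalar_mx_dim1.
  apply: (powers_twirl0_scalar Bu AB).
  have Anu : (A ^+ n)^t* \is unitarymx by rewrite trmxC_unitary unitarymxX.
  have := powers_twirl0_commX Atu BA; rewrite ltnS lt0n n_gt1 -trmxCX => /(_ isT).
  by move/esym/(unitarymx_comm_trmxC Anu); rewrite trmxCK.
- have [n1|n_gt1] := eqVneq n' 0%N; first exact: is_scalar_mx_dim1.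
  apply: (powers_twirl0_scalar Atu BA); apply/esym/(unitarymx_comm_trmxC Au).
  by apply: powers_twirl0_commX; rewrite // ltnS lt0n.
- exists U, V; split; first by apply/orthonormal_eigenbasisP; exists l.
    by apply/orthonormal_eigenbasisP; exists m.
  exact: (powers_twirl0_mutually_unbiased Au Bu AB AUl BVm).
Qed.

Lemma mub_pair_Mblock_gram_scalar : mub_pair A B -> M^t* *m M = (n%:R : C)%:M.
Proof.
case=> nmA nmB /is_scalar_mxP[a Aa] /is_scalar_mxP[b Bb] [U [V [eU eV UV_mub]]].
have [l AUl] := (orthonormal_eigenbasisP A U).1 eU.
have [m BVm] := (orthonormal_eigenbasisP B V).1 eV.
apply/(Mblock_gram_scalarP Au Bu).
exact: mub_twirl0 Au Bu AUl BVm ((no_multiple_eigenvaluesP AUl).1 nmA)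
  ((no_multiple_eigenvaluesP BVm).1 nmB) Aa Bb UV_mub.
Qed.

End EqualityCase.

Theorem mainTheorem8 (R : realType) (n : nat) (A B : 'M[R[i]]_n) :
  (1 <= n)%N -> A \is unitarymx -> B \is unitarymx ->
  `|Tdet A B| <= sqrtC (n%:R : R[i]) ^+ (n * n) /\
  (`|Tdet A B| = sqrtC (n%:R : R[i]) ^+ (n * n) <->
     [/\ no_multiple_eigenvalues A, no_multiple_eigenvalues B,
         is_scalar_mx (A ^+ n), is_scalar_mx (B ^+ n)
       & eigenbases_mutually_unbiased A B]).
Proof.
case: n A B => [//|n'] A B _ Au Bu.
have [T_le T_eq] := Mblock_det_leif Au Bu.
split=> //; split=> [/eqP | equality_case].
  by rewrite T_eq => /eqP /(Mblock_gram_scalar_mub_pair Au Bu).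
by apply/eqP; rewrite T_eq; apply/eqP/(mub_pair_Mblock_gram_scalar Au Bu).
Qed.
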